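(* Let $(X,d)$ be a complete metric space, let $N\in\mathbb{N}\setminus\{0\}$, let $\alpha:X\times X\rightarrow[0,+\infty)$ be $N$--transitive, and let $T:X\rightarrow X$ be an $\alpha$--contractive mapping of Meir--Keeler type satisfying: (A1) $T$ is $\alpha$--admissible; (A2) there exists $x_{0}\in X$ such that $\alpha(x_{0},Tx_{0})\geq1$; (A3) $T$ is $\alpha$--orbitally continuous. Then $T$ has a fixed point, i.e., there exists $x^{\ast}\in X$ with $Tx^{\ast}=x^{\ast}$.
   Context: $\mathbb{N}$ is the set of non-negative integers; $T^n$ is the $n$-th iterate of $T$. $T$ is an $\alpha$--contractive mapping of Meir--Keeler type if for every $\varepsilon>0$ there exists $\delta(\varepsilon)>0$ such that for all $x,y\in X$: $\varepsilon\leq d(x,y)<\varepsilon+\delta(\varepsilon)$ implies $\alpha(x,y)d(Tx,Ty)<\varepsilon$. $T$ is $\alpha$--admissible if $\alpha(x,y)\geq1$ implies $\alpha(Tx,Ty)\geq1$. $\alpha$ is $N$--transitive if for all $x_0,x_1,\dots,x_{N+1}\in X$ with $\alpha(x_i,x_{i+1})\geq1$ for all $i\in\{0,\dots,N\}$ one has $\alpha(x_0,x_{N+1})\geq1$. A sequence $\{x_n\}$ in $X$ is $(T,\alpha)$--orbital if $x_n=T^nx_0$ and $\alpha(x_n,x_{n+1})\geq1$ for all $n\in\mathbb{N}$. $T$ is $\alpha$--orbitally continuous if for every $(T,\alpha)$--orbital sequence $\{x_n\}$ with $x_n\rightarrow x\in X$ there is a subsequence $\{x_{n(k)}\}$ with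 $Tx_{n(k)}\rightarrow Tx$. *)

From Stdlib Require Import Reals.
Open Scope R_scope.

Definition is_metric {X : Type} (d : X -> X -> R) : Prop :=
  (forall x y, 0 <= d x y) /\
  (forall x y, d x y = 0 <-> x = y) /\
  (forall x y, d x y = d y x) /\
  (forall x y z, d x z <= d x y + d y z).

Definition converges_to {X : Type} (d : X -> X -> R) (u : nat -> X) (x : X) : Prop :=
  forall eps, 0 < eps -> exists N, forall n, (N <= n)%nat -> d (u n) x < eps.

Definition cauchy_seq {X : Type} (d : X -> X -> R) (u : nat -> X) : Prop :=
  forall eps, 0 < eps -> exists N, forall m n, (N <= m)%nat -> (N <= n)%nat ->
    d (u m) (u n) < eps.

Definition complete_metric {X : Type} (d : X -> X -> R) : Prop :=
  forall u : nat -> X, cauchy_seq d u -> exists x, converges_to d u x.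

Fixpoint iter_map {X : Type} (T : X -> X) (n : nat) (x : X) : X :=
  match n with
  | O => x
  | S k => T (iter_map T k x)
  end.

Definition alpha_MK_contractive {X : Type} (d : X -> X -> R) (alpha : X -> X -> R)
  (T : X -> X) : Prop :=
  forall eps, 0 < eps -> exists delta, 0 < delta /\
    forall x y, eps <= d x y -> d x y < eps + delta ->
      alpha x y * d (T x) (T y) < eps.

Definition alpha_admissible {X : Type} (alpha : X -> X -> R) (T : X -> X) : Prop :=
  forall x y, 1 <= alpha x y -> 1 <= alpha (T x) (T y).

Definition N_transitive {X : Type} (N : nat) (alpha : X -> X -> R) : Prop :=
  forall x : nat -> X,
    (forall i, (i <= N)%nat -> 1 <= alpha (x i) (x (S i))) ->
    1 <= alpha (x O) (x (S N)).

Definition orbital {X : Type} (alpha : X -> X -> R) (T : X -> X) (x : nat -> X) : Prop :=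
  forall n, x n = iter_map T n (x O) /\ 1 <= alpha (x n) (x (S n)).

Definition alpha_orbitally_continuous {X : Type} (d : X -> X -> R)
  (alpha : X -> X -> R) (T : X -> X) : Prop :=
  forall (x : nat -> X) (z : X), orbital alpha T x -> converges_to d x z ->
    exists phi : nat -> nat, (forall k, (phi k < phi (S k))%nat) /\
      converges_to d (fun k => T (x (phi k))) (T z).

(* By admissibility the orbit x_n = T^n x_0 is alpha-related at consecutive steps, so the
   Meir-Keeler condition makes d(x_n, x_(n+1)) decrease to 0.  N-transitivity relates x_M
   to every x_(M + jN + 1), so the Meir-Keeler condition can be applied to these pairs:
   once the steps beyond M are shorter than delta/N, induction on j keeps
   x_(M + jN + 1) in the ball of radius eps + delta around x_M, and the points in between
   are at most N small steps further.  Hence the orbit is Cauchy; its limit z is a fixed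
   point because orbital continuity makes T z the limit of a subsequence of the orbit. *)

From Stdlib Require Import Reals Lra Lia.
Open Scope R_scope.

Section Metric.

Variables (X : Type) (d : X -> X -> R).
Hypothesis metric_d : is_metric d.

Lemma dist_ge0 x y : 0 <= d x y.
Proof. apply metric_d. Qed.

Lemma dist_eq0 x y : d x y = 0 <-> x = y.
Proof. apply metric_d. Qed.

Lemma dist_xx x : d x x = 0.
Proof. now apply dist_eq0. Qed.

Lemma dist_sym x y : d x y = d y x.
Proof. apply metric_d. Qed.

Lemma dist_triangle x y z : d x z <= d x y + d y z.
Proof. apply metric_d. Qed.

Lemma converges_to_unique (u : nat -> X) a b :
  converges_to d u a -> converges_to d u b -> a = b.
Proof.
  intros Ha Hb. apply dist_eq0.
  destruct (Req_dec (d a b) 0) as [E | E]; [exact E | exfalso].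
  assert (Hab : 0 < d a b) by (pose proof (dist_ge0 a b); lra).
  destruct (Ha (d a b / 2) ltac:(lra)) as [Na HNa].
  destruct (Hb (d a b / 2) ltac:(lra)) as [Nb HNb].
  specialize (HNa (max Na Nb) ltac:(lia)). specialize (HNb (max Na Nb) ltac:(lia)).
  pose proof (dist_triangle a (u (max Na Nb)) b).
  rewrite dist_sym in HNa. lra.
Qed.

Lemma converges_to_subseq (u : nat -> X) (phi : nat -> nat) z :
  (forall k, (phi k < phi (S k))%nat) ->
  converges_to d u z -> converges_to d (fun k => u (phi k)) z.
Proof.
  intros Hphi Hu eps Heps. destruct (Hu eps Heps) as [M HM].
  assert (Hge : forall k, (k <= phi k)%nat).
  { induction k as [| k IH]; [lia | specialize (Hphi k); lia]. }
  exists M. intros k Hk. apply HM. specialize (Hge k). lia.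
Qed.

Lemma dist_le_steps (u : nat -> X) eta M :
  (forall n, (M <= n)%nat -> d (u n) (u (S n)) < eta) ->
  forall n k, (M <= n)%nat -> d (u n) (u (n + k)%nat) <= INR k * eta.
Proof.
  intros Hstep n k Hn. induction k as [| k IH].
  - rewrite Nat.add_0_r, dist_xx. simpl. lra.
  - rewrite Nat.add_succ_r, S_INR.
    pose proof (dist_triangle (u n) (u (n + k)%nat) (u (S (n + k)))).
    pose proof (Hstep (n + k)%nat ltac:(lia)). lra.
Qed.

Section MeirKeeler.

Variables (alpha : X -> X -> R) (T : X -> X).
Hypothesis MK_T : alpha_MK_contractive d alpha T.

Lemma MK_nonexpansive a b : 1 <= alpha a b -> d (T a) (T b) <= d a b.
Proof.
  intros Hab. destruct (Req_dec (d a b) 0) as [E | E].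
  - apply dist_eq0 in E. subst b. rewrite !dist_xx. lra.
  - assert (P : 0 < d a b) by (pose proof (dist_ge0 a b); lra).
    destruct (MK_T _ P) as [delta [Hdelta Hm]].
    specialize (Hm a b (Rle_refl _) ltac:(lra)).
    pose proof (dist_ge0 (T a) (T b)). nra.
Qed.

(* The case [d a b < eps] is covered by nonexpansiveness. *)
Lemma MK_related eps : 0 < eps -> exists delta, 0 < delta /\
  forall a b, 1 <= alpha a b -> d a b < eps + delta -> d (T a) (T b) < eps.
Proof.
  intros Heps. destruct (MK_T _ Heps) as [delta [Hdelta Hm]].
  exists delta. split; [exact Hdelta |]. intros a b Hab Hd.
  destruct (Rle_lt_dec eps (d a b)) as [Hle | Hlt].
  - specialize (Hm a b Hle Hd). pose proof (dist_ge0 (T a) (T b)). nra.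
  - pose proof (MK_nonexpansive a b Hab). lra.
Qed.

Variable x0 : X.
Local Notation x n := (iter_map T n x0).
Hypothesis orbit_related : forall n, 1 <= alpha (x n) (x (S n)).

Lemma orbit_steps_vanish eta : 0 < eta -> exists M, forall n, (M <= n)%nat ->
  d (x n) (x (S n)) < eta.
Proof.
  intros Heta.
  set (dn n := d (x n) (x (S n))).
  assert (Hdec : Un_decreasing dn) by (intro n; apply MK_nonexpansive, orbit_related).
  assert (Hlb : has_lb dn).
  { exists 0. intros y [i ->]. unfold opp_seq, dn. pose proof (dist_ge0 (x i) (x (S i))). lra. }
  destruct (decreasing_cv dn Hdec Hlb) as [l Hl].
  pose proof (decreasing_ineq dn l Hdec Hl) as Hll.
  destruct (Rle_lt_dec l 0) as [Hl0 | Hl0].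
  - destruct (Hl eta Heta) as [M HM]. exists M. intros n Hn.
    change (dn n < eta). specialize (HM n Hn). unfold Rdist in HM. apply Rabs_def2 in HM. lra.
  - (* a positive limit l is impossible: once d(x_n, x_(n+1)) < l + delta, the next
       step is already below l *)
    exfalso. destruct (MK_related l Hl0) as [delta [Hdelta Hm]].
    destruct (Hl delta Hdelta) as [M HM]. specialize (HM M (le_n _)).
    unfold Rdist in HM. apply Rabs_def2 in HM.
    specialize (Hm (x M) (x (S M)) (orbit_related M) ltac:(unfold dn in HM; lra)).
    exact (Rlt_not_le _ _ Hm (Hll (S M))).
Qed.

Variable N : nat.
Hypothesis transitive_alpha : N_transitive N alpha.

Lemma orbit_related_period M j :
  1 <= alpha (x M) (x (M + j * N + 1)).
Proof.
  induction j as [| j IH].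
  - replace (M + 0 * N + 1)%nat with (S M) by lia. apply orbit_related.
  - set (y i := match i with O => x M | _ => x (M + j * N + i) end).
    replace (M + S j * N + 1)%nat with (M + j * N + S N)%nat by lia.
    apply (transitive_alpha y). intros [| i] Hi; [exact IH |]. simpl y.
    replace (M + j * N + S (S i))%nat with (S (M + j * N + S i)) by lia.
    apply orbit_related.
Qed.

Hypothesis N_pos : (0 < N)%nat.

Section Anchor.

Variables (eps delta eta : R) (M : nat).
Hypothesis eps_pos : 0 < eps.
Hypothesis MK_eps_delta :
  forall a b, 1 <= alpha a b -> d a b < eps + delta -> d (T a) (T b) < eps.
Hypothesis steps_small : forall n, (M <= n)%nat -> d (x n) (x (S n)) < eta.
Hypothesis N_eta_small : INR N * eta < delta.

Lemma eta_ge0 : 0 <= eta.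
Proof. pose proof (dist_ge0 (x M) (x (S M))). pose proof (steps_small M (le_n _)). lra. Qed.

Lemma steps_within_delta r : (r < N)%nat -> INR r * eta + eta < delta.
Proof.
  intros Hr. pose proof (le_INR (S r) N Hr) as HrN. rewrite S_INR in HrN.
  pose proof (Rmult_le_compat_r eta _ _ eta_ge0 HrN). lra.
Qed.

Lemma anchor_bound_period j : d (x M) (x (M + j * N + 1)) < eps + delta.
Proof.
  pose proof (steps_within_delta (N - 1) ltac:(lia)).
  assert (Hstep : d (x M) (x (S M)) < eta) by exact (steps_small M (le_n _)).
  induction j as [| j IH].
  - replace (M + 0 * N + 1)%nat with (S M) by lia.
    pose proof (Rmult_le_pos _ _ (pos_INR (N - 1)) eta_ge0). lra.
  - set (m := (M + j * N + 1)%nat) in *.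
    pose proof (MK_eps_delta (x M) (x m) (orbit_related_period M j) IH) as Hnext.
    change (d (x (S M)) (x (S m)) < eps) in Hnext.
    pose proof (dist_le_steps (fun n => x n) eta M steps_small (S m) (N - 1)
      ltac:(unfold m; lia)) as Hchain. cbv beta in Hchain.
    replace (M + S j * N + 1)%nat with (S m + (N - 1))%nat by (unfold m; lia).
    pose proof (dist_triangle (x M) (x (S M)) (x (S m))).
    pose proof (dist_triangle (x M) (x (S m)) (x (S m + (N - 1))%nat)).
    lra.
Qed.

Lemma anchor_bound m : (M <= m)%nat -> d (x M) (x m) < eps + 2 * delta.
Proof.
  intros Hm. pose proof (steps_within_delta 0 N_pos) as Hdelta. simpl in Hdelta.
  pose proof eta_ge0.
  destruct (Nat.eq_dec m M) as [-> | Hne]; [rewrite dist_xx; lra |].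
  (* m = (M + jN + 1) + r with r < N *)
  pose proof (Nat.div_mod (m - S M) N ltac:(lia)) as Hdm.
  pose proof (Nat.mod_upper_bound (m - S M) N ltac:(lia)) as Hr.
  set (j := ((m - S M) / N)%nat) in *. set (r := ((m - S M) mod N)%nat) in *.
  pose proof (anchor_bound_period j).
  set (p := (M + j * N + 1)%nat) in *.
  pose proof (dist_le_steps (fun n => x n) eta M steps_small p r ltac:(unfold p; lia))
    as Hchain. cbv beta in Hchain.
  pose proof (steps_within_delta r Hr).
  replace m with (p + r)%nat by (unfold p; lia).
  pose proof (dist_triangle (x M) (x p) (x (p + r)%nat)). lra.
Qed.

End Anchor.

Lemma orbit_cauchy : cauchy_seq d (fun n => x n).
Proof.
  intros e He. set (eps := e / 6).
  destruct (MK_related eps ltac:(unfold eps; lra)) as [delta0 [Hdelta0 HMK]].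
  pose proof (Rmin_l delta0 eps). pose proof (Rmin_r delta0 eps).
  assert (Hdelta : 0 < Rmin delta0 eps) by (apply Rmin_pos; unfold eps; lra).
  set (delta := Rmin delta0 eps) in *.
  pose proof (pos_INR N) as HN.
  set (eta := delta / (INR N + 1)).
  assert (Heta : 0 < eta) by (apply Rdiv_lt_0_compat; lra).
  assert (Hsmall : INR N * eta < delta).
  { unfold eta. apply (Rmult_lt_reg_r (INR N + 1)); [lra |]. field_simplify; lra. }
  destruct (orbit_steps_vanish eta Heta) as [M HM].
  assert (HMK' : forall a b, 1 <= alpha a b -> d a b < eps + delta -> d (T a) (T b) < eps).
  { intros a b Hab Hd. apply HMK; [exact Hab | lra]. }
  exists M. intros m n Hm Hn.
  pose proof (anchor_bound eps delta eta M ltac:(unfold eps; lra) HMK' HM Hsmall m Hm).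
  pose proof (anchor_bound eps delta eta M ltac:(unfold eps; lra) HMK' HM Hsmall n Hn).
  pose proof (dist_triangle (x m) (x M) (x n)). rewrite (dist_sym (x m) (x M)) in *.
  unfold eps in *. lra.
Qed.

End MeirKeeler.

Lemma orbit_limit_fixed (alpha : X -> X -> R) (T : X -> X) x0 z :
  alpha_orbitally_continuous d alpha T ->
  (forall n, 1 <= alpha (iter_map T n x0) (iter_map T (S n) x0)) ->
  converges_to d (fun n => iter_map T n x0) z -> T z = z.
Proof.
  intros Hcont Hrel Hz.
  destruct (Hcont (fun n => iter_map T n x0) z (fun n => conj eq_refl (Hrel n)) Hz)
    as [phi [Hphi HTz]].
  apply (converges_to_unique (fun k => iter_map T (S (phi k)) x0)); [exact HTz |].
  apply (converges_to_subseq (fun n => iter_map T n x0) (fun k => S (phi k))); [| exact Hz].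
  intro k. specialize (Hphi k). lia.
Qed.

End Metric.

Lemma admissible_orbit_related {X : Type} (alpha : X -> X -> R) (T : X -> X) x0 :
  alpha_admissible alpha T -> 1 <= alpha x0 (T x0) ->
  forall n, 1 <= alpha (iter_map T n x0) (iter_map T (S n) x0).
Proof. intros Hadm Hx0 n. induction n as [| n IH]; [exact Hx0 | exact (Hadm _ _ IH)]. Qed.

Theorem theorem2 (X : Type) (d : X -> X -> R) (N : nat) (alpha : X -> X -> R)
  (T : X -> X) :
  is_metric d ->
  complete_metric d ->
  (0 < N)%nat ->
  (forall x y, 0 <= alpha x y) ->
  N_transitive N alpha ->
  alpha_MK_contractive d alpha T ->
  alpha_admissible alpha T ->
  (exists x0, 1 <= alpha x0 (T x0)) ->
  alpha_orbitally_continuous d alpha T ->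
  exists xs, T xs = xs.
Proof.
  intros Hd Hcomp HN _ Htrans HMK Hadm [x0 Hx0] Hcont.
  pose proof (admissible_orbit_related alpha T x0 Hadm Hx0) as Hrel.
  destruct (Hcomp _ (orbit_cauchy X d Hd alpha T HMK x0 Hrel N Htrans HN)) as [z Hz].
  exists z. exact (orbit_limit_fixed X d Hd alpha T x0 z Hcont Hrel Hz).
Qed.
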